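(* Let $\mathbf{a}$ be a CSCA and $n\in\mathbb{N}$. Then $\mathbf{a}$ possesses gliders with eigenvalues $u^n$ and $u^{-n}$ (i.e. there exist non-zero $\xi,\eta\in\mathcal{P}^2$ with $\mathbf{a}\xi=u^n\xi$ and $\mathbf{a}\eta=u^{-n}\eta$) if and only if $\mathrm{tr}\,\mathbf{a}=u^{-n}+u^n$.
   Context: $\mathcal{P}$ denotes the ring of Laurent polynomials in $u$ over $\mathbb{Z}_2$; $\mathcal{R}$ is the subring of palindromes ($p(u^{-1})=p(u)$). A CSCA (centered symplectic cellular automaton) is a $2\times2$ matrix with entries in $\mathcal{R}$ and determinant $1$, acting on $\mathcal{P}^2$ by matrix multiplication. *)

(* Laurent polynomials over Z_2 are modelled inside the
   field of fractions K of F_2[u]. *)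
From HB Require Import structures.
From mathcomp Require Import all_boot all_order all_algebra.
Set Implicit Arguments. Unset Strict Implicit. Unset Printing Implicit Defensive.
Import GRing.Theory.
Local Open Scope ring_scope.

Notation K := {fraction {poly 'F_2}}.

Notation tofracK := (@FracField.tofrac {poly 'F_2}).
Notation "x %:F" := (tofracK x).

Definition uK : K := ('X : {poly 'F_2})%:F.

Definition laurent (x : K) : Prop :=
  exists (p : {poly 'F_2}) (k : nat), x = p%:F / uK ^+ k.

(* x = p(u)/u^k is a palindrome: substituting u^{-1} for u gives x back,
   i.e. p(u^{-1}) / u^{-k} = x. *)
Definition palindrome (x : K) : Prop :=
  exists (p : {poly 'F_2}) (k : nat),
    x = p%:F / uK ^+ k /\
    x = (map_poly (fun c : 'F_2 => (c%:P)%:F) p).[uK^-1] * uK ^+ k.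

Definition CSCA (a : 'M[K]_2) : Prop :=
  (forall i j, palindrome (a i j)) /\ \det a = 1.

Definition laurent_vec (v : 'cV[K]_2) : Prop := forall i, laurent (v i 0).

Definition has_glider (a : 'M[K]_2) (lam : K) : Prop :=
  exists xi : 'cV[K]_2, laurent_vec xi /\ xi != 0 /\ a *m xi = lam *: xi.

(* Over the field K = F_2(u) an eigenvector of [a] for [l] exists iff
   det (a - l) = 0, and for det a = 1 this reads 1 - l tr a + l^2 = 0, i.e.
   tr a = l + l^-1.  Clearing denominators turns any eigenvector over K into
   one with polynomial entries, i.e. a glider.  For l = u^n and l = u^-n the
   condition is the same equation tr a = u^-n + u^n. *)
From HB Require Import structures.
From mathcomp Require Import all_boot all_order all_algebra ring.
Import GRing.Theory.
Local Open Scope ring_scope.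

Lemma det_mx2 (R : comNzRingType) (A : 'M[R]_2) :
  \det A = A 0 0 * A 1 1 - A 0 1 * A 1 0.
Proof.
rewrite (expand_det_row _ 0) !big_ord_recl big_ord0 addr0 /cofactor !det_mx11.
rewrite /= !mxE /= /bump /= expr0 expr1 mul1r mulN1r mulrN.
by congr (A _ _ * A _ _ - A _ _ * A _ _); apply: val_inj.
Qed.

Lemma mxtrace_mx2 (R : comNzRingType) (A : 'M[R]_2) : \tr A = A 0 0 + A 1 1.
Proof.
by rewrite /mxtrace !big_ord_recl big_ord0 addr0; congr (A _ _ + A _ _); apply: val_inj.
Qed.

Lemma det_subr_scalar_mx2 (R : comNzRingType) (A : 'M[R]_2) (l : R) :
  \det (A - l%:M) = \det A - l * \tr A + l ^+ 2.
Proof. rewrite !det_mx2 mxtrace_mx2 !mxE /=; ring. Qed.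

Lemma col_eigenvectorP (F : fieldType) n (A : 'M[F]_n) (l : F) :
  reflect (exists2 v : 'cV_n, v != 0 & A *m v = l *: v) (\det (A - l%:M) == 0).
Proof.
rewrite -det_tr; apply: (iffP det0P) => [[w w_neq0 wA0] | [v v_neq0 Av]].
  exists w^T; first by rewrite trmx_eq0.
  apply/eqP; rewrite -subr_eq0 -mul_scalar_mx -mulmxBl.
  by rewrite -[_ *m _]trmxK trmx_mul trmxK wA0 trmx0.
exists v^T; first by rewrite trmx_eq0.
by rewrite -trmx_mul mulmxBl mul_scalar_mx Av subrr trmx0.
Qed.

Lemma fraction_numden {R : idomainType} (x : {fraction R}) :
  exists p q, q != 0 /\ x = FracField.tofrac p / FracField.tofrac q.
Proof.
elim/quotW: x => r.
exists (\n_r), (\d_r); split; first exact: denom_ratioP.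
apply: (canRL (mulfK _)); first by rewrite tofrac_eq0 denom_ratioP.
unlock FracField.tofrac; rewrite !piE.
apply/eqmodP; rewrite /= FracField.equivfE /FracField.mulf /=.
by rewrite !numden_Ratio ?mulf_neq0 ?oner_eq0 ?denom_ratioP //= !mulr1 mulrC.
Qed.

Lemma ord2_cases (i : 'I_2) : i = 0 \/ i = 1.
Proof. by case: i => [[|[|//]] ?]; [left | right]; apply: val_inj. Qed.

Lemma laurent_tofrac (p : {poly 'F_2}) : laurent p%:F.
Proof. by exists p, 0%N; rewrite expr0 divr1. Qed.

Lemma laurent_vec_scale_denominators (v : 'cV[K]_2) :
  exists2 c : K, c != 0 & laurent_vec (c *: v).
Proof.
have [p0 [q0 [q0_neq0 v0]]] := fraction_numden (v 0 0).
have [p1 [q1 [q1_neq0 v1]]] := fraction_numden (v 1 0).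
have qF_neq0 q : q != 0 -> q%:F != 0 :> K by rewrite tofrac_eq0.
exists (q0 * q1)%:F; first by rewrite qF_neq0 ?mulf_neq0.
move=> i; rewrite mxE tofracM; have [-> | ->] := ord2_cases i.
- by rewrite v0 mulrC mulrA divfK ?qF_neq0 // -tofracM; apply: laurent_tofrac.
- by rewrite v1 mulrAC -mulrA divfK ?qF_neq0 // -tofracM; apply: laurent_tofrac.
Qed.

Lemma has_gliderE (a : 'M[K]_2) (l : K) : has_glider a l <-> \det (a - l%:M) = 0.
Proof.
split=> [[xi [_ [xi_neq0 a_xi]]] | /eqP/col_eigenvectorP[v v_neq0 a_v]].
  by apply/eqP/col_eigenvectorP; exists xi.
have [c c_neq0 laurent_cv] := laurent_vec_scale_denominators v.
exists (c *: v); split=> //; split.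
  by rewrite scalemx_eq0 negb_or c_neq0.
by rewrite -scalemxAr a_v !scalerA mulrC.
Qed.

Lemma quadratic_reciprocal_eq (F : fieldType) (l t : F) : l != 0 ->
  1 - l * t + l ^+ 2 = 0 <-> t = l + l^-1.
Proof.
move=> l_neq0; split=> [eq0 | ->]; last by field.
apply: (mulfI l_neq0); rewrite mulrDr mulfV // -[LHS]addr0 -eq0; ring.
Qed.

Lemma has_glider_mxtrace (a : 'M[K]_2) (l : K) : \det a = 1 -> l != 0 ->
  has_glider a l <-> \tr a = l + l^-1.
Proof.
move=> det_a l_neq0.
by rewrite has_gliderE det_subr_scalar_mx2 det_a quadratic_reciprocal_eq.
Qed.

Lemma uK_neq0 : uK != 0.
Proof. by rewrite /uK tofrac_eq0 polyX_eq0. Qed.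

Theorem mainTheorem3 (a : 'M[K]_2) (n : nat) :
  CSCA a ->
  (has_glider a (uK ^+ n) /\ has_glider a (uK ^- n)) <->
  \tr a = uK ^- n + uK ^+ n.
Proof.
case=> _ det_a.
have uXn_neq0 : uK ^+ n != 0 by rewrite expf_neq0 // uK_neq0.
have uXNn_neq0 : uK ^- n != 0 by rewrite invr_eq0.
rewrite (has_glider_mxtrace _ _ det_a uXn_neq0) (has_glider_mxtrace _ _ det_a uXNn_neq0).
by rewrite invrK [uK ^+ n + _]addrC; split=> [[] | ->].
Qed.
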